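(* Let $k\ge\ell\ge1$ be integers with $k+\ell\ge6$, let $f$ be the function below, and let $\alpha\in[0,\frac12]$. Then the function $$f_*(d)=\alpha(1-\alpha)^{k+\ell}f(d)+\frac{(k-1)^{k-1}\ell^\ell}{(k+\ell-1)^{k+\ell-1}}(1-\alpha)\alpha^{k+\ell}(1-d)$$ attains its maximum over $d\in[0,1]$ at some $d\in\left[\frac{k-1}{k+\ell-1},\frac{k}{k+\ell}\right]$.
   Context: $f:[0,1]\to\mathbb R$ is defined by $f(x)=\frac{(k-1)^{k-1}\ell^\ell}{(k+\ell-1)^{k+\ell-1}}x$ for $x\in[0,\frac{k-1}{k+\ell-1}]$, $f(x)=x^k(1-x)^\ell$ for $x\in[\frac{k-1}{k+\ell-1},\frac{k}{k+\ell}]$, and $f(x)=\frac{k^k\ell^\ell}{(k+\ell)^{k+\ell}}$ for $x\in[\frac{k}{k+\ell},1]$. *)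

From Stdlib Require Import Reals.
Open Scope R_scope.

Definition c1 (k l : nat) : R :=
  (INR (k - 1)) ^ (k - 1) * (INR l) ^ l / (INR (k + l - 1)) ^ (k + l - 1).

Definition c2 (k l : nat) : R :=
  (INR k) ^ k * (INR l) ^ l / (INR (k + l)) ^ (k + l).

(* The piecewise function f on [0,1] (values outside [0,1] are irrelevant).
   The pieces agree at the breakpoints, so the choice of branch at the
   breakpoints does not matter. *)
Definition f (k l : nat) (x : R) : R :=
  if Rle_dec x (INR (k - 1) / INR (k + l - 1)) then c1 k l * x
  else if Rle_dec x (INR k / INR (k + l)) then x ^ k * (1 - x) ^ l
  else c2 k l.

Definition fstar (k l : nat) (alpha d : R) : R :=
  alpha * (1 - alpha) ^ (k + l) * f k l d
  + c1 k l * (1 - alpha) * alpha ^ (k + l) * (1 - d).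

(* Write f_*(d) = A f(d) + B (1-d) with A = alpha (1-alpha)^(k+l) and
   B = c1 (1-alpha) alpha^(k+l).  The argument splits [0,1] at p and q.
   - The constants c1 and c2 are the values of x^(k-1)(1-x)^l at p and of
     x^k(1-x)^l at q, so f is continuous: f = c1 x left of p,
     f = x^k (1-x)^l on [p,q] and f = c2 right of q.
   - Left of p, f_* is affine with slope A c1 - B >= 0 (this is where
     alpha <= 1/2 enters), hence f_*(d) <= f_*(p).
   - Right of q, f_* = A c2 + B (1-d) is nonincreasing, hence f_*(d) <= f_*(q).
   - On [p,q], f_* coincides with a polynomial, which attains its maximum
     on the compact interval [p,q]; by the two previous points this is a
     global maximum. *)
From Stdlib Require Import Reals Lra Lia.
Open Scope R_scope.

Lemma max_attained_between (F h : R -> R) (p q : R) :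
  p <= q ->
  (forall x, p <= x <= q -> continuity_pt h x) ->
  (forall x, p <= x <= q -> F x = h x) ->
  (forall x, x <= p -> F x <= F p) ->
  (forall x, q <= x -> F x <= F q) ->
  exists d, p <= d <= q /\ forall x, F x <= F d.
Proof.
  intros Hpq Hcont Heq Hleft Hright.
  destruct (continuity_ab_maj h p q Hpq Hcont) as [d [Hmax Hd]].
  assert (Hmid : forall x, p <= x <= q -> F x <= F d).
  { intros x Hx. rewrite (Heq x Hx), (Heq d Hd). exact (Hmax x Hx). }
  exists d. split; [exact Hd|].
  intros x. destruct (Rle_dec x p) as [Hxp|Hxp].
  - apply Rle_trans with (F p); [exact (Hleft x Hxp)|apply Hmid; lra].
  - destruct (Rle_dec x q) as [Hxq|Hxq].
    + apply Hmid; lra.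
    + apply Rle_trans with (F q); [apply Hright; lra|apply Hmid; lra].
Qed.

Lemma power_product_at_ratio (a b : nat) : (0 < a + b)%nat ->
  (INR a / INR (a + b)) ^ a * (1 - INR a / INR (a + b)) ^ b
  = INR a ^ a * INR b ^ b / INR (a + b) ^ (a + b).
Proof.
  intros Hab. assert (Hpos : 0 < INR (a + b)) by (apply lt_0_INR; lia).
  replace (1 - INR a / INR (a + b)) with (INR b / INR (a + b))
    by (rewrite plus_INR in *; field; lra).
  unfold Rdiv. rewrite !Rpow_mult_distr, !pow_inv, pow_add.
  field. split; apply pow_nonzero; lra.
Qed.

(* For alpha <= 1/2, alpha^n <= (1-alpha)^n gives the comparison of the two
   weights of f_*; it makes the left (affine) part of f_* nondecreasing. *)
Lemma weight_comparison (alpha : R) (n : nat) : 0 <= alpha <= 1 / 2 ->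
  (1 - alpha) * alpha ^ S n <= alpha * (1 - alpha) ^ S n.
Proof.
  intros Ha.
  assert (Hpow : alpha ^ n <= (1 - alpha) ^ n) by (apply pow_incr; lra).
  assert (Hprod : 0 <= alpha * (1 - alpha)) by nra.
  simpl. nra.
Qed.

Section Breakpoints.
Variables k l : nat.
Hypothesis Hk : (1 <= k)%nat.
Hypothesis Hl : (1 <= l)%nat.

Definition lower_break : R := INR (k - 1) / INR (k + l - 1).
Definition upper_break : R := INR k / INR (k + l).

Lemma breakpoints_ordered : 0 <= lower_break <= upper_break /\ upper_break <= 1.
Proof.
  unfold lower_break, upper_break.
  assert (Hkl : (k + l - 1 = (k - 1) + l)%nat) by lia.
  rewrite Hkl, plus_INR, plus_INR, minus_INR by lia. simpl.
  assert (H1 : 1 <= INR k) by (apply (le_INR 1); lia).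
  assert (H2 : 1 <= INR l) by (apply (le_INR 1); lia).
  repeat split.
  - apply Rmult_le_pos; [lra|left; apply Rinv_0_lt_compat; lra].
  - apply Rmult_le_reg_r with ((INR k - 1 + INR l) * (INR k + INR l)); [nra|].
    field_simplify; [nra|lra|lra].
  - apply Rmult_le_reg_r with (INR k + INR l); [lra|].
    field_simplify; lra.
Qed.

Lemma c1_at_lower_break :
  c1 k l * lower_break = lower_break ^ k * (1 - lower_break) ^ l.
Proof.
  unfold c1, lower_break.
  assert (Hkl : (k + l - 1 = (k - 1) + l)%nat) by lia.
  rewrite Hkl, <- power_product_at_ratio by lia.
  destruct k as [|m]; [lia|]. replace (S m - 1)%nat with m by lia.
  rewrite <- tech_pow_Rmult. ring.
Qed.

Lemma c2_at_upper_break : c2 k l = upper_break ^ k * (1 - upper_break) ^ l.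
Proof.
  unfold c2, upper_break. rewrite power_product_at_ratio by lia. reflexivity.
Qed.

Lemma f_left (x : R) : x <= lower_break -> f k l x = c1 k l * x.
Proof.
  intros Hx. unfold f. fold lower_break.
  destruct (Rle_dec x lower_break); [reflexivity|lra].
Qed.

Lemma f_middle (x : R) : lower_break <= x <= upper_break ->
  f k l x = x ^ k * (1 - x) ^ l.
Proof.
  intros Hx. unfold f. fold lower_break upper_break.
  destruct (Rle_dec x lower_break).
  - replace x with lower_break by lra. exact c1_at_lower_break.
  - destruct (Rle_dec x upper_break); [reflexivity|lra].
Qed.

Lemma f_right (x : R) : upper_break < x -> f k l x = c2 k l.
Proof.
  intros Hx. pose proof breakpoints_ordered as Hord. unfold f.
  fold lower_break upper_break.
  destruct (Rle_dec x lower_break); [lra|].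
  destruct (Rle_dec x upper_break); [lra|reflexivity].
Qed.

Variable alpha : R.
Hypothesis Ha : 0 <= alpha <= 1 / 2.

Lemma c1_nonneg : 0 <= c1 k l.
Proof.
  unfold c1, Rdiv. apply Rmult_le_pos.
  - apply Rmult_le_pos; apply pow_le, pos_INR.
  - left. apply Rinv_0_lt_compat, pow_lt, lt_0_INR. lia.
Qed.

(* Left of p, f_* is affine with nonnegative slope. *)
Lemma fstar_left (x : R) : x <= lower_break ->
  fstar k l alpha x <= fstar k l alpha lower_break.
Proof.
  intros Hx. unfold fstar. rewrite (f_left x Hx), f_left by lra.
  pose proof c1_nonneg as Hc1.
  replace (k + l)%nat with (S (k + l - 1)) by lia.
  pose proof (weight_comparison alpha (k + l - 1) Ha) as Hw.
  assert (Hslope : 0 <= c1 k l * (alpha * (1 - alpha) ^ S (k + l - 1)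
                                  - (1 - alpha) * alpha ^ S (k + l - 1)))
    by (apply Rmult_le_pos; lra).
  nra.
Qed.

(* Right of q, f_* is A c2 + B (1-x) with B >= 0, hence nonincreasing. *)
Lemma fstar_right (x : R) : upper_break <= x ->
  fstar k l alpha x <= fstar k l alpha upper_break.
Proof.
  intros Hx. destruct (Req_dec x upper_break) as [->|Hne]; [lra|].
  pose proof breakpoints_ordered as Hord.
  unfold fstar. rewrite f_right by lra.
  rewrite f_middle, <- c2_at_upper_break by lra.
  assert (HB : 0 <= c1 k l * (1 - alpha) * alpha ^ (k + l)).
  { apply Rmult_le_pos; [apply Rmult_le_pos; [exact c1_nonneg|lra]|].
    apply pow_le; lra. }
  nra.
Qed.

End Breakpoints.

Theorem lemma2p5 (k l : nat) (alpha : R) :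
  (1 <= l)%nat -> (l <= k)%nat -> (6 <= k + l)%nat ->
  0 <= alpha <= 1 / 2 ->
  exists d : R,
    INR (k - 1) / INR (k + l - 1) <= d <= INR k / INR (k + l) /\
    forall d' : R, 0 <= d' <= 1 -> fstar k l alpha d' <= fstar k l alpha d.
Proof.
  intros Hl Hlk _ Ha.
  assert (Hk : (1 <= k)%nat) by lia.
  destruct (breakpoints_ordered k l Hk Hl) as [[_ Hpq] _].
  set (h := fun x => alpha * (1 - alpha) ^ (k + l) * (x ^ k * (1 - x) ^ l)
                     + c1 k l * (1 - alpha) * alpha ^ (k + l) * (1 - x)).
  destruct (max_attained_between (fstar k l alpha) h
              (lower_break k l) (upper_break k l)) as [d [Hd Hmax]].
  - exact Hpq.
  - intros x _. unfold h. reg.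
  - intros x Hx. unfold fstar, h. rewrite f_middle; auto.
  - exact (fstar_left k l Hk Hl alpha Ha).
  - exact (fstar_right k l Hk Hl alpha Ha).
  - exists d. split; [exact Hd|]. intros d' _. apply Hmax.
Qed.
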